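(* Let $p\le1/2$ and let $g,h\colon(\{0,1\}^n,\mu_p)\to\{0,1\}$ be cross-intersecting. Then \[\mu_p(h)\mu_p(g)\le\sum_{d=1}^n\left(\frac{p}{1-p}\right)^d|\langle h^{=d},g\rangle|,\] where the inner product is with respect to $\mu_p$.
   Context: $\mu_p$ is the $p$-biased product measure on $\{0,1\}^n$, $\mu_p(f)=\mathbb{E}_{\mu_p}f$, $\langle u,v\rangle=\mathbb{E}_{\mu_p}[uv]$. With $\chi_i(x)=\frac{x_i-p}{\sqrt{p(1-p)}}$ and $\chi_S=\prod_{i\in S}\chi_i$, $\hat h(S)=\langle h,\chi_S\rangle$ and $h^{=d}=\sum_{|S|=d}\hat h(S)\chi_S$. Identifying subsets of $[n]$ with points of $\{0,1\}^n$, $g,h$ are cross-intersecting if $A\cap B\ne\emptyset$ whenever $g(A)=1$ and $h(B)=1$. *)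

(* Points of {0,1}^n are identified with subsets of [n] = 'I_n. *)
From HB Require Import structures.
From mathcomp Require Import all_boot all_order all_algebra.
Set Implicit Arguments. Unset Strict Implicit. Unset Printing Implicit Defensive.
Import Order.TTheory GRing.Theory Num.Theory.
Local Open Scope ring_scope.

Section Biased.
Variables (R : rcfType) (n : nat) (p : R).

Definition mu_pt (x : {set 'I_n}) : R := p ^+ #|x| * (1 - p) ^+ (n - #|x|).

Definition mu_p (f : {set 'I_n} -> R) : R := \sum_(x : {set 'I_n}) mu_pt x * f x.

Definition inner (u v : {set 'I_n} -> R) : R := mu_p (fun x => u x * v x).

Definition chi1 (i : 'I_n) (x : {set 'I_n}) : R :=
  ((i \in x)%:R - p) / Num.sqrt (p * (1 - p)).

Definition chi (S : {set 'I_n}) (x : {set 'I_n}) : R := \prod_(i in S) chi1 i x.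

Definition fourier (h : {set 'I_n} -> R) (S : {set 'I_n}) : R := inner h (chi S).

Definition level (h : {set 'I_n} -> R) (d : nat) (x : {set 'I_n}) : R :=
  \sum_(S : {set 'I_n} | #|S| == d) fourier h S * chi S x.

End Biased.

Definition b2R (R : rcfType) (n : nat) (f : {set 'I_n} -> bool) : {set 'I_n} -> R :=
  fun x => (f x)%:R.

Definition cross_intersecting (n : nat) (g h : {set 'I_n} -> bool) : Prop :=
  forall A B : {set 'I_n}, g A -> h B -> A :&: B != set0.

From mathcomp Require Import all_boot all_order all_algebra.
From mathcomp Require Import ring.
Import Order.TTheory GRing.Theory Num.Theory.
Local Open Scope ring_scope.

(* For lam = -p/(1-p) consider the noise-weighted correlation
     N(H, G) = \sum_S lam^|S| * hat H(S) * hat G(S).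
   Expanding the Fourier coefficients, N(H, G) is a double sum over points
   x, y of mu(x) H(x) mu(y) G(y) times \sum_S lam^|S| chi_S(x) chi_S(y), and
   this inner sum factors as \prod_i (1 + lam chi_i(x) chi_i(y)).  When
   i \in x and i \in y the i-th factor vanishes for this particular lam, so
   for cross-intersecting g, h every term of the double sum is zero and
   N(h, g) = 0.  Grouping N by levels, the level-0 term is mu(h) mu(g) and
   the level-d term is lam^d <h^{=d}, g>, hence mu(h) mu(g) equals minus the
   sum of the higher levels; the triangle inequality gives the bound.  The
   argument works for every 0 < p < 1; the hypothesis p <= 1/2 is only used
   to ensure p < 1. *)

Section FourierBasics.
Variables (R : rcfType) (n : nat) (p : R).

Lemma inner_level (u v : {set 'I_n} -> R) (d : nat) :
  inner p (level p u d) v =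
  \sum_(S : {set 'I_n} | #|S| == d) fourier p u S * fourier p v S.
Proof.
rewrite /inner /mu_p /level.
under eq_bigr => x _ do rewrite mulr_suml mulr_sumr.
rewrite exchange_big /=; apply: eq_bigr => S _.
rewrite /fourier /inner /mu_p mulr_sumr; apply: eq_bigr => x _.
by rewrite mulrCA -mulrA; congr (_ * _); rewrite mulrC -mulrA.
Qed.

(* The empty character is constant 1, so hat u(empty) is the expectation. *)
Lemma fourier_set0 (u : {set 'I_n} -> R) : fourier p u set0 = mu_p p u.
Proof.
rewrite /fourier /inner /mu_p; apply: eq_bigr => x _.
by rewrite /chi big_set0 mulr1.
Qed.

Lemma noise_kernel_prod (lam : R) (x y : {set 'I_n}) :
  \sum_(S : {set 'I_n}) lam ^+ #|S| * (chi p S x * chi p S y) =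
  \prod_(i : 'I_n) (lam * (chi1 p i x * chi1 p i y) + 1).
Proof.
rewrite bigA_distr; apply: eq_bigr => S _.
rewrite -big_mkcond /= /chi.
by rewrite [RHS]big_split /= [X in _ = _ * X]big_split /= prodr_const.
Qed.

Lemma noise_correlation_points (lam : R) (u v : {set 'I_n} -> R) :
  \sum_(S : {set 'I_n}) lam ^+ #|S| * (fourier p u S * fourier p v S) =
  \sum_(x : {set 'I_n}) \sum_(y : {set 'I_n})
     (mu_pt p x * u x) * (mu_pt p y * v y) *
     \prod_(i : 'I_n) (lam * (chi1 p i x * chi1 p i y) + 1).
Proof.
under eq_bigr => S _ do rewrite /fourier /inner /mu_p mulr_suml mulr_sumr.
rewrite exchange_big /=; apply: eq_bigr => x _.
under eq_bigr => S _ do rewrite mulr_sumr mulr_sumr.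
rewrite exchange_big /=; apply: eq_bigr => y _.
rewrite -noise_kernel_prod mulr_sumr; apply: eq_bigr => S _.
ring.
Qed.

Lemma noise_correlation_levels (lam : R) (u v : {set 'I_n} -> R) :
  \sum_(S : {set 'I_n}) lam ^+ #|S| * (fourier p u S * fourier p v S) =
  \sum_(0 <= d < n.+1) lam ^+ d * inner p (level p u d) v.
Proof.
rewrite big_mkord.
under [RHS]eq_bigr => d _ do rewrite inner_level mulr_sumr.
rewrite (partition_big (fun S : {set 'I_n} => inord #|S| : 'I_n.+1) predT) //=.
apply: eq_bigr => d _; apply: eq_big => S;
  have cardS : (#|S| < n.+1)%N by rewrite ltnS -[n in (_ <= n)%N]card_ord max_card.
  by rewrite -val_eqE /= inordK.
by move=> /eqP <-; rewrite inordK.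
Qed.

End FourierBasics.

Section CrossIntersecting.
Variables (R : rcfType) (n : nat) (p : R).
Hypotheses (p_gt0 : 0 < p) (p_lt1 : p < 1).

(* With lam = -p/(1-p), the one-coordinate kernel vanishes on a coordinate
   shared by x and y, since chi_i(x) chi_i(y) = (1-p)/p there. *)
Lemma noise_factor_common (i : 'I_n) (x y : {set 'I_n}) :
  i \in x -> i \in y -> - (p / (1 - p)) * (chi1 p i x * chi1 p i y) + 1 = 0.
Proof.
move=> ix iy; rewrite /chi1 ix iy mulf_div -[Num.sqrt _ * _]expr2 sqr_sqrtr; last first.
  by rewrite mulr_ge0 ?subr_ge0 ?ltW.
have q_neq0 : 1 - p != 0 by rewrite subr_eq0 eq_sym lt_eqF.
have p_neq0 : p != 0 by rewrite gt_eqF.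
by rewrite /=; field; rewrite q_neq0 p_neq0.
Qed.

Lemma cross_intersecting_noise_correlation {g h : {set 'I_n} -> bool} :
  cross_intersecting g h ->
  \sum_(S : {set 'I_n}) (- (p / (1 - p))) ^+ #|S| *
     (fourier p (b2R R h) S * fourier p (b2R R g) S) = 0.
Proof.
move=> hgh; rewrite noise_correlation_points.
apply: big1 => x _; apply: big1 => y _; rewrite /b2R.
case hx: (h x); last by rewrite mulr0 !mul0r.
case gy: (g y); last by rewrite !mulr0 mul0r.
have /set0Pn [i] := hgh y x gy hx; rewrite inE => /andP [iy ix].
by rewrite (bigD1 i) //= noise_factor_common // mul0r mulr0.
Qed.

Lemma cross_intersecting_measure_bound (g h : {set 'I_n} -> bool) :
  cross_intersecting g h ->
  mu_p p (b2R R h) * mu_p p (b2R R g) <=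
  \sum_(1 <= d < n.+1)
     (p / (1 - p)) ^+ d * `| inner p (level p (b2R R h) d) (b2R R g) |.
Proof.
move=> hgh; have levels := cross_intersecting_noise_correlation hgh.
set H := b2R R h in levels *; set G := b2R R g in levels *.
rewrite noise_correlation_levels big_ltn // expr0 mul1r inner_level in levels.
have level0 : \sum_(S : {set 'I_n} | #|S| == 0%N) fourier p H S * fourier p G S =
              mu_p p H * mu_p p G.
  by rewrite (eq_bigl (pred1 set0)) ?big_pred1_eq ?fourier_set0 // => S; rewrite cards_eq0.
move/eqP: levels; rewrite level0 addr_eq0 => /eqP ->.
apply: le_trans (ler_norm _) _; rewrite normrN.
apply: le_trans (ler_norm_sum _ _ _) _; apply: ler_sum => d _.
have ratio_ge0 : 0 <= p / (1 - p) by rewrite divr_ge0 ?subr_ge0 ?ltW.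
by rewrite normrM normrX normrN (ger0_norm ratio_ge0).
Qed.

End CrossIntersecting.

Theorem mainTheorem17 (R : rcfType) (n : nat) (p : R)
  (hp0 : 0 < p) (hp : p <= 2^-1)
  (g h : {set 'I_n} -> bool) (hgh : cross_intersecting g h) :
  mu_p p (b2R R h) * mu_p p (b2R R g) <=
  \sum_(1 <= d < n.+1)
     (p / (1 - p)) ^+ d * `| inner p (level p (b2R R h) d) (b2R R g) |.
Proof.
have p_lt1 : p < 1 by apply: (le_lt_trans hp); rewrite invf_lt1 ?ltr1n.
exact: cross_intersecting_measure_bound.
Qed.
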